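(* Let $Q_5$ be the edge graph of the $5$-dimensional hypercube (vertices $\{0,1\}^5$, two vertices adjacent iff they differ in exactly one coordinate). Up to a permutation of the colours (simultaneous permutation of rows and columns of the colour adjacency matrix), the colour adjacency matrices of perfect $2$-colourings of $Q_5$ are exactly the six matrices \[ \begin{pmatrix} 0 & 5 \\ 5 & 0 \end{pmatrix}, \begin{pmatrix} 1 & 4 \\ 4 & 1 \end{pmatrix}, \begin{pmatrix} 2 & 3 \\ 1 & 4 \end{pmatrix}, \begin{pmatrix} 2 & 3 \\ 3 & 2 \end{pmatrix}, \begin{pmatrix} 3 & 2 \\ 2 & 3 \end{pmatrix}, \begin{pmatrix} 4 & 1 \\ 1 & 4 \end{pmatrix}, \] and the colour adjacency matrices of perfect $3$-colourings of $Q_5$ are exactly the eight matrices \[ \begin{pmatrix} 0 & 1 & 4 \\ 1 & 0 & 4 \\ 2 & 2 & 1 \end{pmatrix}, \begin{pmatrix} 0 & 3 & 2 \\ 3 & 0 & 2 \\ 1 & 1 & 3 \end{pmatrix}, \begin{pmatrix} 0 & 5 & 0 \\ 1 & 0 & 4 \\ 0 & 2 & 3 \end{pmatrix}, \begin{pmatrix} 1 & 0 & 4 \\ 0 & 1 & 4 \\ 1 & 3 & 1 \end{pmatrix}, \begin{pmatrix} 1 & 0 & 4 \\ 0 & 1 & 4 \\ 2 & 2 & 1 \end{pmatrix}, \begin{pmatrix} 1 & 2 & 2 \\ 2 & 1 & 2 \\ 1 & 1 & 3 \end{pmatrix}, \begin{pmatrix} 2 & 1 & 2 \\ 1 & 2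 & 2 \\ 1 & 1 & 3 \end{pmatrix}, \begin{pmatrix} 3 & 0 & 2 \\ 0 & 3 & 2 \\ 1 & 1 & 3 \end{pmatrix}. \] In particular each of these matrices is realized by some perfect colouring of $Q_5$.
   Context: An $m$-colouring of a graph $G=(V,E)$ is a partition of $V$ into $m$ disjoint nonempty sets $V_1,\dots,V_m$ (the colours; adjacent vertices may have the same colour). It is perfect if for all $i,j$ every vertex of colour $i$ has the same number $a_{ij}$ of neighbours of colour $j$; the matrix $A=(a_{ij})$ is its colour adjacency matrix. Relabelling colours by a permutation $\sigma$ replaces $A$ by $(a_{\sigma(i)\sigma(j)})$. *)

From mathcomp Require Import all_boot all_order all_algebra all_fingroup.
Set Implicit Arguments. Unset Strict Implicit. Unset Printing Implicit Defensive.

Definition Q5 := {ffun 'I_5 -> bool}.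

Definition adjQ5 (x y : Q5) : bool := #|[set i : 'I_5 | x i != y i]| == 1%N.

(* An m-colouring is a surjective map c : V -> 'I_m (the colour classes
   V_i = c^-1(i) are disjoint, nonempty and cover V). *)
Definition colouring (m : nat) (c : Q5 -> 'I_m) : Prop :=
  forall k : 'I_m, exists v : Q5, c v = k.

Definition perfect_colouring (m : nat) (c : Q5 -> 'I_m) (A : 'M[nat]_m) : Prop :=
  colouring c /\
  forall (v : Q5) (j : 'I_m), #|[set w : Q5 | adjQ5 v w & c w == j]| = A (c v) j.

Definition relabel (m : nat) (s : 'S_m) (A : 'M[nat]_m) : 'M[nat]_m :=
  \matrix_(i, j) A (s i) (s j).

Definition mxl (m : nat) (rows : seq (seq nat)) : 'M[nat]_m :=
  \matrix_(i, j) nth 0%N (nth [::] rows i) j.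

Definition list2 : seq 'M[nat]_2 :=
  [:: mxl 2 [:: [:: 0; 5]; [:: 5; 0]];
      mxl 2 [:: [:: 1; 4]; [:: 4; 1]];
      mxl 2 [:: [:: 2; 3]; [:: 1; 4]];
      mxl 2 [:: [:: 2; 3]; [:: 3; 2]];
      mxl 2 [:: [:: 3; 2]; [:: 2; 3]];
      mxl 2 [:: [:: 4; 1]; [:: 1; 4]]]%N.

Definition list3 : seq 'M[nat]_3 :=
  [:: mxl 3 [:: [:: 0; 1; 4]; [:: 1; 0; 4]; [:: 2; 2; 1]];
      mxl 3 [:: [:: 0; 3; 2]; [:: 3; 0; 2]; [:: 1; 1; 3]];
      mxl 3 [:: [:: 0; 5; 0]; [:: 1; 0; 4]; [:: 0; 2; 3]];
      mxl 3 [:: [:: 1; 0; 4]; [:: 0; 1; 4]; [:: 1; 3; 1]];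
      mxl 3 [:: [:: 1; 0; 4]; [:: 0; 1; 4]; [:: 2; 2; 1]];
      mxl 3 [:: [:: 1; 2; 2]; [:: 2; 1; 2]; [:: 1; 1; 3]];
      mxl 3 [:: [:: 2; 1; 2]; [:: 1; 2; 2]; [:: 1; 1; 3]];
      mxl 3 [:: [:: 3; 0; 2]; [:: 0; 3; 2]; [:: 1; 1; 3]]]%N.

From mathcomp Require Import all_boot all_order all_algebra all_fingroup.
Set Implicit Arguments. Unset Strict Implicit. Unset Printing Implicit Defensive.

(* Let A be the matrix of a perfect colouring of Q5.  Since Q5 is 5-regular, every row of A
   sums to 5, so there are finitely many candidates.  Counting the edges between two colour
   classes gives n_i a_ij = n_j a_ji for the (positive) class sizes n_i, which sum to 32.
   The translations x |-> x + u are automorphisms of Q5 acting transitively, so every colour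
   can be moved to vertex 0; hence a backtracking search over the 32 vertices, started with
   any colour at vertex 0, must find a perfect colouring.  The candidates surviving these
   tests turn out to be relabellings of the listed matrices, and for each listed matrix the
   search produces a colouring. *)

(* Under [vm_compute] the arguments of [&&] and [||] are evaluated eagerly; these variants
   stop at the first decisive element. *)
Fixpoint all_lazy T (a : pred T) (s : seq T) : bool :=
  if s is x :: s' then (if a x then all_lazy a s' else false) else true.

Fixpoint has_lazy T (a : pred T) (s : seq T) : bool :=
  if s is x :: s' then (if a x then true else has_lazy a s') else false.

Fixpoint find_some (T : eqType) U (f : T -> option U) (s : seq T) : option U :=
  if s is x :: s' then (if f x is Some y then Some y else find_some f s') else None.

Lemma all_lazyE T (a : pred T) s : all_lazy a s = all a s.
Proof. by elim: s => //= x s ->; case: (a x). Qed.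

Lemma has_lazyE T (a : pred T) s : has_lazy a s = has a s.
Proof. by elim: s => //= x s ->; case: (a x). Qed.

Lemma find_someP (T : eqType) U (f : T -> option U) s y :
  find_some f s = Some y -> exists2 x, x \in s & f x = Some y.
Proof.
elim: s => //= x s IH; case E: (f x) => [z|].
  by case=> <-; exists x; rewrite ?mem_head.
by case/IH=> x' x's fx'; exists x'; rewrite ?inE ?x's ?orbT.
Qed.

Lemma find_some_isSome (T : eqType) U (f : T -> option U) s x :
  x \in s -> f x -> find_some f s.
Proof.
elim: s => //= y s IH; rewrite inE; case E: (f y) => [z|] //.
by case/orP=> [/eqP ->|/IH//]; rewrite E.
Qed.

(* A colouring of the graph on the vertices 0, ..., N-1 with adjacency lists [nb] is the
   sequence of its colours; [extend] colours the vertices in this order. *)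
Section Search.

Variables (N : nat) (nb : nat -> seq nat) (m : nat) (A : nat -> nat -> nat).
Implicit Types p q : seq nat.

Definition partial_ok p u :=
  all (fun j => count (fun w => (w < size p) && (nth 0 p w == j)) (nb u) <= A (nth 0 p u) j)
      (iota 0 m).

(* Only the newest vertex and its neighbours can have become inconsistent. *)
Definition consistent p :=
  let k := (size p).-1 in
  partial_ok p k && all (fun u => if u < size p then partial_ok p u else true) (nb k).

Definition perfectb q :=
  [&& size q == N, all (fun x => x < m) q, all (fun j => j \in q) (iota 0 m) &
      all (fun u => all (fun j => count (fun w => nth 0 q w == j) (nb u) == A (nth 0 q u) j)
                        (iota 0 m)) (iota 0 N)].

Fixpoint extend fuel p : option (seq nat) :=
  if fuel is n.+1 then
    find_some (fun x => let p' := rcons p x in if consistent p' then extend n p' else None)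
              (iota 0 m)
  else if perfectb p then Some p else None.

Definition search_from k := extend N.-1 [:: k].

(* By vertex-transitivity every colour must be possible at vertex 0; trying the colours
   with large diagonal entries first only makes infeasible candidates fail faster. *)
Definition feasible :=
  all_lazy (fun k => isSome (search_from k)) (sort (fun i j => A j j <= A i i) (iota 0 m)).

Lemma extend_sound fuel p q : extend fuel p = Some q -> perfectb q.
Proof.
elim: fuel p => [|n IH] p /=; first by case: ifP => // perf_p [<-].
move=> found; have [x _] := find_someP found; case: ifP => // _; exact: IH.
Qed.

Lemma feasible_sound : 0 < m -> feasible -> exists q, perfectb q.
Proof.
move=> m_gt0; rewrite /feasible all_lazyE => /allP /(_ 0).
rewrite mem_sort mem_iota m_gt0 => /(_ isT).
by case E: (search_from 0) => [q|] // _; exists q; apply: extend_sound E.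
Qed.

Lemma partial_ok_take q n u : perfectb q -> u < n <= N -> partial_ok (take n q) u.
Proof.
case/and4P=> /eqP size_q _ _ /allP count_q /andP[lt_un le_nN].
have lt_uN := leq_trans lt_un le_nN.
have size_take_q : size (take n q) = n by rewrite size_takel ?size_q.
apply/allP=> j j_col; rewrite size_take_q nth_take //.
have u_in : u \in iota 0 N by rewrite mem_iota.
have /allP/(_ j j_col)/eqP <- := count_q u u_in.
by apply: sub_count => w /andP[lt_wn]; rewrite nth_take.
Qed.

Lemma consistent_take q n : perfectb q -> 0 < n <= N -> consistent (take n q).
Proof.
move=> perf_q /andP[n_gt0 le_nN].
have size_take_q : size (take n q) = n.
  by case/and4P: perf_q => /eqP size_q _ _ _; rewrite size_takel ?size_q.
rewrite /consistent size_take_q partial_ok_take //=; last by rewrite ltn_predL n_gt0.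
by apply/allP=> u _; case: ifP => // lt_un; rewrite partial_ok_take ?lt_un.
Qed.

Lemma extend_complete q : perfectb q ->
  forall d n, n + d = N -> 0 < n -> extend d (take n q).
Proof.
move=> perf_q; have /and4P[/eqP size_q /allP q_col _ _] := perf_q.
elim=> [|d IH] n def_N n_gt0 /=.
  by rewrite addn0 in def_N; rewrite take_oversize ?size_q ?def_N // perf_q.
have lt_nN : n < N by rewrite -def_N addnS ltnS leq_addr.
apply: (@find_some_isSome _ _ _ _ (nth 0 q n)).
  by rewrite mem_iota q_col // mem_nth // size_q.
rewrite -take_nth ?size_q // consistent_take ?lt_nN //.
by apply: IH; rewrite ?addSnnS.
Qed.

Lemma search_from_complete q : 0 < N -> perfectb q -> search_from (nth 0 q 0).
Proof.
move=> N_gt0 perf_q; have /and4P[/eqP size_q _ _ _] := perf_q.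
rewrite /search_from.
have -> : [:: nth 0 q 0] = take 1 q by rewrite (take_nth 0) ?take0 ?size_q.
by apply: extend_complete; rewrite ?add1n ?prednK.
Qed.

End Search.

Fixpoint compositions k d : seq (seq nat) :=
  if k is k'.+1 then [seq x :: s | x <- iota 0 d.+1, s <- compositions k' (d - x)]
  else if d is 0 then [:: [::]] else [::].

Lemma mem_compositions k d s : (s \in compositions k d) = (size s == k) && (sumn s == d).
Proof.
elim: k d s => [|k IH] d s; first by case: d; case: s.
apply/allpairsPdep/andP=> [[x [t [x_in t_in ->]]]|[size_s /eqP sum_s]].
  move: x_in t_in; rewrite mem_iota IH ltnS => le_xd /andP[/eqP <- /eqP sum_t] /=.
  by rewrite sum_t subnKC.
case: s size_s sum_s => // x s /eqP [size_s] <-.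
by exists x, s; split; rewrite // ?mem_iota ?IH /= ?size_s ?addKn ?eqxx ?ltnS ?leq_addr.
Qed.

Fixpoint tuples_over T (S : seq T) k : seq (seq T) :=
  if k is k'.+1 then [seq x :: s | x <- S, s <- tuples_over S k'] else [:: [::]].

Lemma mem_tuples_over (T : eqType) (S : seq T) k s :
  (s \in tuples_over S k) = (size s == k) && all (fun x => x \in S) s.
Proof.
elim: k s => [|k IH] s; first by case: s.
apply/allpairsPdep/andP=> [[x [t [x_in t_in ->]]]|[size_s s_in]].
  by move: t_in; rewrite IH /= x_in => /andP[/eqP -> ->].
case: s size_s s_in => // x s /eqP [size_s] /andP[x_in s_in].
by exists x, s; split; rewrite // IH size_s eqxx.
Qed.

Section Admissible.

Variables (m : nat) (A : nat -> nat -> nat).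

Definition all_pairs (P : nat -> nat -> bool) :=
  all_lazy (fun i => all_lazy (P i) (iota i.+1 (m - i.+1))) (iota 0 m).

Definition balanced (n : seq nat) := all_pairs (fun i j => nth 0 n i * A i j == nth 0 n j * A j i).

Definition support_symmetric := all_pairs (fun i j => (A i j == 0) == (A j i == 0)).

Definition admissible (sizes : seq (seq nat)) :=
  if support_symmetric then has_lazy balanced sizes else false.

Lemma all_pairsP (P : nat -> nat -> bool) : (forall i j : 'I_m, P i j) -> all_pairs P.
Proof.
move=> P_ok; rewrite /all_pairs all_lazyE; apply/allP=> i; rewrite mem_iota => lt_im.
rewrite all_lazyE; apply/allP=> j; rewrite mem_iota subnKC // => /andP[_ lt_jm].
exact: (P_ok (Ordinal lt_im) (Ordinal lt_jm)).
Qed.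

Lemma admissible_sizes sizes n : n \in sizes ->
  (forall i : 'I_m, 0 < nth 0 n i) ->
  (forall i j : 'I_m, nth 0 n i * A i j = nth 0 n j * A j i) ->
  admissible sizes.
Proof.
move=> n_in n_gt0 n_bal; rewrite /admissible.
have -> : support_symmetric.
  apply: all_pairsP => i j.
  rewrite -[A i j == 0](eqn_pmul2l (n_gt0 i)) -[A j i == 0](eqn_pmul2l (n_gt0 j)).
  by rewrite !muln0 n_bal.
by rewrite has_lazyE; apply/hasP; exists n => //; apply: all_pairsP => i j; rewrite n_bal.
Qed.

End Admissible.

Definition entry (r : seq (seq nat)) i j := nth 0 (nth [::] r i) j.

Definition relabelled m (sg : seq nat) r r' :=
  all (fun i => all (fun j => entry r' i j == entry r (nth 0 sg i) (nth 0 sg j)) (iota 0 m))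
      (iota 0 m).

Definition listed_up_to_perm m rows r :=
  has (fun sg => has (relabelled m sg r) rows) (permutations (iota 0 m)).

Lemma perm_of_seq m (sg : seq nat) : sg \in permutations (iota 0 m) ->
  exists s : 'S_m, forall i : 'I_m, val (s i) = nth 0 sg i.
Proof.
rewrite mem_permutations => perm_sg.
have size_sg : size sg = m by rewrite (perm_size perm_sg) size_iota.
have lt_sg (i : 'I_m) : nth 0 sg i < m.
  have lt_i : i < size sg by rewrite size_sg.
  by have := mem_nth 0 lt_i; rewrite (perm_mem perm_sg) mem_iota.
pose g (i : 'I_m) := insubd i (nth 0 sg i).
have val_g i : val (g i) = nth 0 sg i by rewrite val_insubd lt_sg.
have g_inj : injective g.
  move=> i j /(congr1 val); rewrite !val_g => /eqP.
  by rewrite nth_uniq ?size_sg ?(perm_uniq perm_sg) ?iota_uniq // => /eqP/val_inj.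
by exists (perm g_inj) => i; rewrite permE.
Qed.

Lemma sum_binary_digits k n : \sum_(i < n) odd (k %/ 2 ^ i) * 2 ^ i = k %% 2 ^ n.
Proof.
elim: n => [|n IH]; first by rewrite big_ord0 expn0 modn1.
rewrite big_ord_recr /= IH expnS [RHS](divn_eq _ (2 ^ n)) -modn_divl modn2 addnC.
by rewrite (@modn_dvdm _ k _ (dvdn_mull 2 (dvdnn _))).
Qed.

Lemma card_ord_count n (P : pred nat) : #|[set i : 'I_n | P i]| = count P (iota 0 n).
Proof. by rewrite -sum1dep_card -(big_mkord _ (fun=> 1)) sum1_count /index_iota subn0. Qed.

Definition vertex k : Q5 := [ffun i : 'I_5 => odd (k %/ 2 ^ i)].

Definition code (x : Q5) := \sum_(i < 5) x i * 2 ^ i.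

Lemma vertexK k : k < 32 -> code (vertex k) = k.
Proof.
move=> lt_k; rewrite /code (eq_bigr (fun i : 'I_5 => odd (k %/ 2 ^ i) * 2 ^ i)).
  by rewrite sum_binary_digits modn_small.
by move=> i _; rewrite ffunE.
Qed.

Lemma card_Q5 : #|Q5| = 32.
Proof. by rewrite card_ffun card_bool card_ord. Qed.

Lemma vertex_ord_bij : bijective (fun k : 'I_32 => vertex k).
Proof.
apply: inj_card_bij; last by rewrite card_Q5 card_ord.
by move=> k l /(congr1 code); rewrite !vertexK // => /val_inj.
Qed.

Lemma vertex_onto x : exists2 k, k < 32 & x = vertex k.
Proof.
have [code' _ vertexK'] := vertex_ord_bij.
by exists (code' x); rewrite ?vertexK'.
Qed.

Lemma card_Q5_count (P : pred Q5) : #|[set x | P x]| = count (P \o vertex) (iota 0 32).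
Proof.
rewrite -(card_ord_count 32 (P \o vertex)) -!sum1dep_card.
by rewrite (reindex (fun k : 'I_32 => vertex k)) //; apply: onW_bij; apply: vertex_ord_bij.
Qed.

Definition hamming k l := count (fun i => odd (k %/ 2 ^ i) != odd (l %/ 2 ^ i)) (iota 0 5).

Lemma adjQ5_vertex k l : adjQ5 (vertex k) (vertex l) = (hamming k l == 1).
Proof.
rewrite /adjQ5 /hamming -card_ord_count; congr (_ == 1).
by apply: eq_card => i; rewrite !inE !ffunE.
Qed.

(* Tabulated so that [vm_compute] evaluates the neighbour lists only once. *)
Definition neighbour_table := [seq [seq l <- iota 0 32 | hamming k l == 1] | k <- iota 0 32].

Definition neighbours k := nth [::] neighbour_table k.

Lemma neighboursE k : k < 32 -> neighbours k = [seq l <- iota 0 32 | hamming k l == 1].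
Proof. by move=> lt_k; rewrite /neighbours (nth_map 0) ?size_iota ?nth_iota. Qed.

Lemma neighbours_lt k l : k < 32 -> l \in neighbours k -> l < 32.
Proof. by move=> lt_k; rewrite neighboursE // mem_filter mem_iota => /and3P[]. Qed.

Lemma size_neighbours k : k < 32 -> size (neighbours k) = 5.
Proof.
have all5 : all (fun k => size (neighbours k) == 5) (iota 0 32) by vm_compute.
by move=> lt_k; apply/eqP; move/allP: all5; apply; rewrite mem_iota.
Qed.

Lemma card_adj_vertex k (P : pred Q5) : k < 32 ->
  #|[set w | adjQ5 (vertex k) w & P w]| = count (P \o vertex) (neighbours k).
Proof.
move=> lt_k; rewrite card_Q5_count neighboursE // count_filter.
by apply: eq_count => l /=; rewrite adjQ5_vertex andbC.
Qed.

Lemma card_adjQ5 v : #|[set w | adjQ5 v w]| = 5.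
Proof.
have [k lt_k ->] := vertex_onto v.
rewrite -[RHS](size_neighbours lt_k) -count_predT -(card_adj_vertex predT lt_k).
by apply: eq_card => w; rewrite !inE andbT.
Qed.

Lemma adjQ5_sym v w : adjQ5 v w = adjQ5 w v.
Proof. by rewrite /adjQ5; congr (_ == 1); apply: eq_card => i; rewrite !inE eq_sym. Qed.

Lemma sum_card_fibres (T : finType) m (f : T -> 'I_m) (P : pred T) :
  \sum_(j < m) #|[set x | P x & f x == j]| = #|[set x | P x]|.
Proof.
rewrite -sum1dep_card (partition_big f xpredT) //=.
by apply: eq_bigr => j _; rewrite sum1dep_card.
Qed.

Lemma sum_class_sizes m (c : Q5 -> 'I_m) : \sum_(j < m) #|[set v | c v == j]| = 32.
Proof. by rewrite -card_Q5 -cardsT -(sum_card_fibres c predT). Qed.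

Lemma class_size_gt0 m (c : Q5 -> 'I_m) i : colouring c -> 0 < #|[set v | c v == i]|.
Proof. by case/(_ i)=> v cv; apply/card_gt0P; exists v; rewrite inE cv. Qed.

Section PerfectColourings.

Variables (m : nat) (A : 'M[nat]_m).
Implicit Type c : Q5 -> 'I_m.

Lemma perfect_colouring_relabel c (s : 'S_m) :
  perfect_colouring c (relabel s A) -> perfect_colouring (s \o c) A.
Proof.
case=> c_onto c_count; split=> [k|v j].
  by have [v cv] := c_onto (s^-1 k)%g; exists v; rewrite /= cv permKV.
have -> : [set w | adjQ5 v w & s (c w) == j] = [set w | adjQ5 v w & c w == (s^-1 j)%g].
  by apply/setP=> w; rewrite !inE -{1}(permKV s j) (inj_eq perm_inj).
by rewrite c_count mxE permKV.
Qed.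

Lemma perfect_colouring_comp c (g : Q5 -> Q5) :
  bijective g -> (forall v w, adjQ5 (g v) (g w) = adjQ5 v w) ->
  perfect_colouring c A -> perfect_colouring (c \o g) A.
Proof.
case=> h gK hK g_adj [c_onto c_count]; split=> [k|v j].
  by have [v cv] := c_onto k; exists (h v); rewrite /= hK.
have -> : [set w | adjQ5 v w & c (g w) == j] = g @^-1: [set w | adjQ5 (g v) w & c w == j].
  by apply/setP=> w; rewrite !inE g_adj.
by rewrite card_preimset ?c_count //; apply: can_inj gK.
Qed.

Definition translate (u v : Q5) : Q5 := [ffun i => u i (+) v i].

Lemma translateK u : involutive (translate u).
Proof. by move=> v; apply/ffunP=> i; rewrite !ffunE addKb. Qed.

Lemma adjQ5_translate u v w : adjQ5 (translate u v) (translate u w) = adjQ5 v w.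
Proof.
rewrite /adjQ5; congr (_ == 1); apply: eq_card => i.
by rewrite !inE !ffunE; case: (u i); case: (v i); case: (w i).
Qed.

Lemma perfect_colouring_at_vertex0 c (k : 'I_m) : perfect_colouring c A ->
  exists c', perfect_colouring c' A /\ c' (vertex 0) = k.
Proof.
move=> perf_c; have [u cu] := perf_c.1 k.
exists (c \o translate u); split.
  apply: (perfect_colouring_comp _ _ perf_c); last exact: adjQ5_translate.
  by exists (translate u); apply: translateK.
by rewrite /= -cu; congr c; apply/ffunP=> i; rewrite !ffunE div0n addbF.
Qed.

Lemma perfect_row_sum c (i : 'I_m) : perfect_colouring c A -> \sum_(j < m) A i j = 5.
Proof.
case=> c_onto c_count; have [v <-] := c_onto i.
by rewrite -(eq_bigr _ (fun j _ => c_count v j)) sum_card_fibres card_adjQ5.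
Qed.

Lemma double_count c (i j : 'I_m) : perfect_colouring c A ->
  #|[set v | c v == i]| * A i j = #|[set v | c v == j]| * A j i.
Proof.
case=> _ c_count.
pose edges i' j' := \sum_v \sum_w ([&& c v == i', adjQ5 v w & c w == j'] : nat).
have edgesE i' j' : edges i' j' = #|[set v | c v == i']| * A i' j'.
  rewrite -sum_nat_cond_const big_mkcond; apply: eq_bigr => v _.
  case: eqP => [<-|_]; last by rewrite big1.
  rewrite -c_count -sum1dep_card [RHS]big_mkcond.
  by apply: eq_bigr => w _ /=; case: (_ && _).
rewrite -!edgesE /edges exchange_big; apply: eq_bigr => v _; apply: eq_bigr => w _.
by rewrite adjQ5_sym; case: (c v == j); case: (c w == i); case: adjQ5.
Qed.

End PerfectColourings.

Definition colour_seq m (c : Q5 -> 'I_m) := [seq val (c (vertex k)) | k <- iota 0 32].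

Lemma perfectb_colour_seq m (c : Q5 -> 'I_m) (A : 'M[nat]_m) (An : nat -> nat -> nat) :
  (forall i j : 'I_m, An i j = A i j) ->
  perfect_colouring c A -> perfectb 32 neighbours m An (colour_seq c).
Proof.
move=> An_A [c_onto c_count].
have nth_cs k : k < 32 -> nth 0 (colour_seq c) k = c (vertex k).
  by move=> lt_k; rewrite (nth_map 0) ?size_iota ?nth_iota.
apply/and4P; split.
- by rewrite size_map size_iota.
- by apply/allP=> _ /mapP[k _ ->]; apply: ltn_ord.
- apply/allP=> j; rewrite mem_iota => /= lt_jm.
  have [v cv] := c_onto (Ordinal lt_jm); have [k lt_k def_v] := vertex_onto v.
  by apply/mapP; exists k; rewrite ?mem_iota // -def_v cv.
apply/allP=> k; rewrite mem_iota => /= lt_k; apply/allP=> j; rewrite mem_iota => /= lt_jm.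
rewrite nth_cs // (An_A _ (Ordinal lt_jm)) -c_count card_adj_vertex //.
by apply/eqP/eq_in_count=> l /(neighbours_lt lt_k) lt_l /=; rewrite nth_cs.
Qed.

Lemma perfect_colouring_of_perfectb m (A : 'M[nat]_m.+1) (An : nat -> nat -> nat) q :
  (forall i j : 'I_m.+1, An i j = A i j) ->
  perfectb 32 neighbours m.+1 An q -> perfect_colouring (fun v => inord (nth 0 q (code v))) A.
Proof.
move=> An_A /and4P[/eqP size_q /allP q_col /allP q_onto /allP q_count].
have lt_q k : k < 32 -> nth 0 q k < m.+1 by move=> lt_k; rewrite q_col ?mem_nth ?size_q.
split=> [j|v j].
  have /(nthP 0)[k lt_k qk] : val j \in q by apply: q_onto; rewrite mem_iota ltn_ord.
  rewrite size_q in lt_k.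
  by exists (vertex k); apply: val_inj; rewrite /= vertexK // qk inordK ?ltn_ord.
have [k lt_k ->] := vertex_onto v; rewrite vertexK // card_adj_vertex //.
have k_in : k \in iota 0 32 by rewrite mem_iota.
have j_in : val j \in iota 0 m.+1 by rewrite mem_iota ltn_ord.
rewrite -An_A inordK ?lt_q // -(eqP (allP (q_count k k_in) _ j_in)).
apply: eq_in_count => l /(neighbours_lt lt_k) lt_l /=.
by rewrite vertexK // -(inj_eq val_inj) /= inordK ?lt_q.
Qed.

Definition rows_of m (A : 'M[nat]_m) := [seq [seq A i j | j <- enum 'I_m] | i <- enum 'I_m].

Lemma entry_rows_of m (A : 'M[nat]_m) (i j : 'I_m) : entry (rows_of A) i j = A i j.
Proof. by rewrite /entry !(nth_map i) -?enumT ?size_enum_ord // !nth_ord_enum. Qed.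

Definition candidates m := tuples_over (compositions m 5) m.

Definition class_size_vectors m := [seq n <- compositions m 32 | all (fun x => 0 < x) n].

Definition feasibleQ5 m A := feasible 32 neighbours m A.

(* [sizes] is let-bound so that [vm_compute] builds it only once. *)
Definition classified m rows :=
  let sizes := class_size_vectors m in
  all_lazy (fun r => if admissible m (entry r) sizes then
                       if feasibleQ5 m (entry r) then listed_up_to_perm m rows r else true
                     else true)
           (candidates m).

Section Classification.

Variables (m : nat) (A : 'M[nat]_m) (c : Q5 -> 'I_m).
Hypothesis perf_c : perfect_colouring c A.

Lemma rows_of_candidate : rows_of A \in candidates m.
Proof.
rewrite mem_tuples_over size_map size_enum_ord eqxx; apply/allP=> _ /mapP[i _ ->].
rewrite mem_compositions size_map size_enum_ord eqxx sumnE big_map big_enum /=.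
by rewrite (perfect_row_sum i perf_c).
Qed.

Lemma rows_of_admissible : admissible m (entry (rows_of A)) (class_size_vectors m).
Proof.
pose n := [seq #|[set v | c v == i]| | i <- enum 'I_m].
have nth_n (i : 'I_m) : nth 0 n i = #|[set v | c v == i]|.
  by rewrite (nth_map i) -?enumT ?size_enum_ord // nth_ord_enum.
apply: (@admissible_sizes _ _ _ n) => [|i|i j]; last 2 first.
- by rewrite nth_n; apply: class_size_gt0 perf_c.1.
- by rewrite !nth_n !entry_rows_of double_count.
rewrite mem_filter mem_compositions size_map size_enum_ord eqxx.
rewrite sumnE big_map big_enum /= sum_class_sizes eqxx andbT.
by apply/allP=> _ /mapP[i _ ->]; apply: class_size_gt0 perf_c.1.
Qed.

Lemma rows_of_feasible : feasibleQ5 m (entry (rows_of A)).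
Proof.
rewrite /feasibleQ5 /feasible all_lazyE; apply/allP=> k; rewrite mem_sort mem_iota => /= lt_km.
have [c' [perf_c' c'0]] := perfect_colouring_at_vertex0 (Ordinal lt_km) perf_c.
have := search_from_complete _ (perfectb_colour_seq (entry_rows_of A) perf_c').
by rewrite /= c'0; apply.
Qed.

Lemma classified_perfect rows : classified m rows -> listed_up_to_perm m rows (rows_of A).
Proof.
rewrite /classified all_lazyE => /allP/(_ _ rows_of_candidate).
by rewrite rows_of_admissible rows_of_feasible.
Qed.

End Classification.

Lemma listed_relabel m rows (A : 'M[nat]_m) :
  listed_up_to_perm m rows (rows_of A) -> exists s : 'S_m, relabel s A \in map (mxl m) rows.
Proof.
case/hasP=> sg sg_perm /hasP[r r_in /allP rel].
have [s val_s] := perm_of_seq sg_perm.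
exists s; apply/mapP; exists r => //; apply/matrixP=> i j; rewrite !mxE.
have i_in : val i \in iota 0 m by rewrite mem_iota ltn_ord.
have j_in : val j \in iota 0 m by rewrite mem_iota ltn_ord.
have /allP/(_ _ j_in)/eqP := rel _ i_in.
by rewrite -!val_s !entry_rows_of => <-.
Qed.

Lemma listed_perfect m rows (A : 'M[nat]_m.+1) (s : 'S_m.+1) :
  all (fun r => feasibleQ5 m.+1 (entry r)) rows -> relabel s A \in map (mxl m.+1) rows ->
  exists c : Q5 -> 'I_m.+1, perfect_colouring c A.
Proof.
move=> /allP feas /mapP[r r_in def_r].
have [q perf_q] := feasible_sound (ltn0Sn m) (feas r r_in).
have entry_mxl (i j : 'I_m.+1) : entry r i j = mxl m.+1 r i j by rewrite mxE.
have := perfect_colouring_of_perfectb entry_mxl perf_q.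
by rewrite -def_r => /perfect_colouring_relabel perf; eexists; exact: perf.
Qed.

Lemma classification m rows :
  classified m.+1 rows -> all (fun r => feasibleQ5 m.+1 (entry r)) rows ->
  forall A : 'M[nat]_m.+1,
    (exists c : Q5 -> 'I_m.+1, perfect_colouring c A) <->
    (exists s : 'S_m.+1, relabel s A \in map (mxl m.+1) rows).
Proof.
move=> cl feas A; split=> [[c perf_c]|[s listed]].
  exact/listed_relabel/(classified_perfect perf_c cl).
exact: listed_perfect feas listed.
Qed.

(* The rows of the matrices in [list2] and [list3]: matrices themselves are built from
   finite functions, which [vm_compute] cannot evaluate. *)
Definition rows2 :=
  [:: [:: [:: 0; 5]; [:: 5; 0]];
      [:: [:: 1; 4]; [:: 4; 1]];
      [:: [:: 2; 3]; [:: 1; 4]];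
      [:: [:: 2; 3]; [:: 3; 2]];
      [:: [:: 3; 2]; [:: 2; 3]];
      [:: [:: 4; 1]; [:: 1; 4]]].

Definition rows3 :=
  [:: [:: [:: 0; 1; 4]; [:: 1; 0; 4]; [:: 2; 2; 1]];
      [:: [:: 0; 3; 2]; [:: 3; 0; 2]; [:: 1; 1; 3]];
      [:: [:: 0; 5; 0]; [:: 1; 0; 4]; [:: 0; 2; 3]];
      [:: [:: 1; 0; 4]; [:: 0; 1; 4]; [:: 1; 3; 1]];
      [:: [:: 1; 0; 4]; [:: 0; 1; 4]; [:: 2; 2; 1]];
      [:: [:: 1; 2; 2]; [:: 2; 1; 2]; [:: 1; 1; 3]];
      [:: [:: 2; 1; 2]; [:: 1; 2; 2]; [:: 1; 1; 3]];
      [:: [:: 3; 0; 2]; [:: 0; 3; 2]; [:: 1; 1; 3]]].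

Theorem theorem6p1 :
  (forall A : 'M[nat]_2,
     (exists c : Q5 -> 'I_2, perfect_colouring c A) <->
     (exists s : 'S_2, relabel s A \in list2)) /\
  (forall A : 'M[nat]_3,
     (exists c : Q5 -> 'I_3, perfect_colouring c A) <->
     (exists s : 'S_3, relabel s A \in list3)).
Proof.
split; [apply: (@classification 1 rows2) | apply: (@classification 2 rows3)].
all: by vm_compute.
Qed.
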